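(* Let $W=\mathfrak{S}_n$, $\ast=\mathrm{id}$, $w\in I_\ast$, and let $(s_{i_1},\dots,s_{i_k},w)$ be a reduced sequence with $k\ge3$ and $i_{k-2}=i_k=i_{k-1}\pm1$. Write $x=s_{i_k}$, $y=s_{i_{k-1}}$. Then exactly one of the following holds: (a) $xw\ne wx$, $yxwx\neq xwxy$, $xyxwxy\neq yxwxyx$, and $yw\neq wy$, $xywy\neq ywyx$, $yxywyx\neq xywyxy$; or (b) $xw\neq wx$, $yxwx\ne xwxy$, $xyxwxy=yxwxyx$, and $yw=wy$, $xyw\neq ywx$, $yxywx\neq xywxy$; or (c) $xw=wx$, $yxw\neq xwy$, $xyxwy\neq yxwyx$, and $yw\neq wy$, $xywy\ne ywyx$, $yxywyx=xywyxy$.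
   Context: $\mathfrak{S}_n$ with $s_i=(i,i+1)$, $S=\{s_1,\dots,s_{n-1}\}$; $I_\ast=\{w\in\mathfrak{S}_n:w^2=1\}$. For $s\in S$, $w\in I_\ast$: $s\ltimes w=sw$ if $sw=ws$, $s\ltimes w=sws$ otherwise; iterated from the right. $\rho(w)$ is the minimal $k$ with $w=s_{i_1}\ltimes\cdots\ltimes s_{i_k}\ltimes 1$. A sequence $(s_{i_1},\dots,s_{i_k},w)$ is reduced if $\rho(s_{i_1}\ltimes\cdots\ltimes s_{i_k}\ltimes w)=\rho(w)+k$. *)

From mathcomp Require Import all_boot all_fingroup.
Set Implicit Arguments. Unset Strict Implicit. Unset Printing Implicit Defensive.
Local Open Scope group_scope.

(* Simple transposition s_i = (i, i+1) of S_n, 1-based: for 1 <= i <= n-1 it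
   swaps the 0-based positions i-1 and i of 'I_n.  Outside that range it is
   the identity (never used, since indices are constrained). *)
Definition sgen (n i : nat) : 'S_n :=
  match @insub nat (fun k => k < n) _ i.-1, @insub nat (fun k => k < n) _ i with
  | Some a, Some b => tperm (a : 'I_n) (b : 'I_n)
  | _, _ => 1
  end.

Definition is_gen_index (n i : nat) : bool := (0 < i) && (i < n).

(* twisted involutions for * = id : w^2 = 1 *)
Definition is_invol (n : nat) (w : 'S_n) : bool := w * w == 1.

Definition ltimes (n : nat) (s w : 'S_n) : 'S_n :=
  if s * w == w * s then s * w else s * w * s.

Definition act_seq (n : nat) (idx : seq nat) (w : 'S_n) : 'S_n :=
  foldr (fun i v => ltimes (sgen n i) v) w idx.

Definition rho_is (n : nat) (w : 'S_n) (r : nat) : Prop :=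
  (exists idx : seq nat, [/\ size idx = r, all (is_gen_index n) idx
                           & act_seq idx 1 = w])
  /\ (forall idx : seq nat, all (is_gen_index n) idx -> act_seq idx 1 = w ->
        r <= size idx).

Definition reduced_seq (n : nat) (idx : seq nat) (w : 'S_n) : Prop :=
  exists r : nat, rho_is w r /\ rho_is (act_seq idx w) (r + size idx).

From mathcomp Require Import all_boot all_fingroup zify.
Set Implicit Arguments. Unset Strict Implicit. Unset Printing Implicit Defensive.
Local Open Scope group_scope.

(* For an involution v of S_n put rank4 v = 2 inv(v) + #{moved points}.  For an
   adjacent transposition s = (p p+1), s ⋉ v has rank4 v + 4 if v(p) < v(p+1)
   and rank4 v - 4 otherwise; since every involution other than 1 has such a
   descent, rank4 v = 4 rho(v).  Hence in a reduced sequence each of the last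
   three steps x, y, x is an ascent.
   What remains only concerns w near the three consecutive points q0 < q1 < q2
   moved by x and y.  Products of x, y and w containing w equally often modulo 2
   permute the points q_i and w(q_i) and agree elsewhere, so the equations of the
   trichotomy and the ascent conditions are computed on at most six labelled
   points, and the statement is checked for each possible pattern of w on
   {q0, q1, q2}. *)

Lemma sum_eq_off2 (T : finType) (f g : T -> nat) (a b : T) : a != b ->
    (forall j, j != a -> j != b -> f j = g j) ->
  \sum_j f j + (g a + g b) = \sum_j g j + (f a + f b).
Proof.
move=> ab fg.
have split_ab h : \sum_j h j = h a + (h b + \sum_(j | (j != a) && (j != b)) h j).
  rewrite (bigD1 a) //= (bigD1 b) /=; last by rewrite eq_sym.
  by congr (_ + (_ + _)); apply: eq_bigl => j; rewrite andbC.
rewrite !split_ab (eq_bigr g) => [|j /andP[]]; [lia | exact: fg].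
Qed.

Lemma tpermE (T : finType) (a b z : T) :
  tperm a b z = if z == a then b else if z == b then a else z.
Proof. by case: tpermP => [->|->|/eqP/negbTE-> /eqP/negbTE->]; rewrite ?eqxx //; case: eqP. Qed.

Section Rank.
Variable n : nat.
Implicit Types (v : 'S_n) (p q i j : 'I_n).

Lemma ltimes_tpermE v p q : ltimes (tperm p q) v =
  if tperm p q * v == v * tperm p q then tperm p q * v else tperm p q * v * tperm p q.
Proof. by []. Qed.

Definition ninv v := \sum_(ij : 'I_n * 'I_n) ((ij.1 < ij.2) && (v ij.2 < v ij.1)).
Definition nmoved v := \sum_(j : 'I_n) (v j != j).

(* [rank4 v = 4 rho(v)] for an involution [v], as rho(v) = (l(v) + #2-cycles)/2. *)
Definition rank4 v := (2 * ninv v + nmoved v)%N.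

Lemma adjacent_neq p q : nat_of_ord q = p.+1 -> p != q.
Proof. by move=> pq; rewrite -(inj_eq val_inj) /= pq neq_ltn ltnSn. Qed.

Lemma ltn_tperm p q i j : nat_of_ord q = p.+1 ->
    (i, j) != (p, q) -> (i, j) != (q, p) ->
  (tperm p q i < tperm p q j) = (i < j).
Proof.
move=> pq hpq hqp.
case: tpermP => [ei|ei|/eqP ni /eqP ni']; case: tpermP => [ej|ej|/eqP nj /eqP nj'];
  subst; rewrite ?eqxx // in hpq hqp;
  repeat match goal with H : is_true (_ != _) |- _ => move: H end;
  rewrite -?(inj_eq val_inj) /=; lia.
Qed.

Lemma ninv_tperm_mul v p q : nat_of_ord q = p.+1 ->
  ninv (tperm p q * v) + (v q < v p) = ninv v + (v p < v q).
Proof.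
move=> pq; rewrite /ninv.
have tt_inj : injective (fun ij : 'I_n * 'I_n => (tperm p q ij.1, tperm p q ij.2)).
  by move=> [i j] [i' j'] /= [/perm_inj -> /perm_inj ->].
rewrite (reindex_inj tt_inj) /=.
under eq_bigr => ij _ do rewrite !permM !tpermK.
have neq : (p, q) != (q, p) by rewrite xpair_eqE (negbTE (adjacent_neq pq)).
have := @sum_eq_off2 _
  (fun ij : 'I_n * 'I_n => (tperm p q ij.1 < tperm p q ij.2) && (v ij.2 < v ij.1))
  (fun ij : 'I_n * 'I_n => (ij.1 < ij.2) && (v ij.2 < v ij.1)) _ _ neq.
have pq1 : p < q by rewrite pq.
have qp0 : q < p = false by rewrite pq ltnNge leqnSn.
rewrite /= tpermL tpermR pq1 qp0 /= addn0 add0n => ->; first by rewrite addnC.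
by move=> [i j] h1 h2 /=; rewrite ltn_tperm.
Qed.

Lemma ninvV v : ninv v^-1 = ninv v.
Proof.
rewrite /ninv (reindex_inj (_ : injective (fun ij : 'I_n * 'I_n => (v ij.2, v ij.1)))).
  by apply: eq_bigr => -[i j] _ /=; rewrite !permK andbC.
by move=> [i j] [i' j'] /= [/perm_inj -> /perm_inj ->].
Qed.

Lemma nmoved_tperm_mul v p q : p != q ->
  nmoved (tperm p q * v) + ((v p != p) + (v q != q)) = nmoved v + ((v p != q) + (v q != p)).
Proof.
move=> pq; rewrite /nmoved.
rewrite (reindex_inj (@perm_inj _ (tperm p q))) /=.
under eq_bigr => j _ do rewrite permM tpermK.
rewrite (@sum_eq_off2 _ _ (fun j => v j != j) _ _ pq) ?tpermL ?tpermR //.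
by move=> j jp jq; rewrite tpermD // eq_sym.
Qed.

Lemma nmoved_conj_tperm v p q : nmoved (tperm p q * v * tperm p q) = nmoved v.
Proof.
rewrite /nmoved (reindex_inj (@perm_inj _ (tperm p q))).
by apply: eq_bigr => j _; rewrite !permM tpermK (inj_eq perm_inj).
Qed.

Lemma commute_tpermP v p q : p != q ->
  reflect ((v p = p /\ v q = q) \/ (v p = q /\ v q = p)) (tperm p q * v == v * tperm p q).
Proof.
move=> pq; apply: (iffP eqP) => [/permP/(_ p)|vpq].
  rewrite !permM tpermL; case: (tpermP p q (v p)) => [->|->|vp1 vp2 E]; [by left|by right|].
  by move/perm_inj: E => /eqP; rewrite eq_sym (negbTE pq).
apply/permP => j; rewrite !permM.
case: (tpermP p q j) => [->|->|/eqP jp /eqP jq];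
  try by case: vpq => -[-> ->]; rewrite ?tpermL ?tpermR.
have [vjp vjq] : p != v j /\ q != v j.
  case: vpq => -[vp vq]; split; apply/eqP => /esym E;
    [move/eqP: jp | move/eqP: jq | move/eqP: jq | move/eqP: jp];
    by apply; apply: (@perm_inj _ v); rewrite E ?vp ?vq.
by rewrite tpermD.
Qed.

Lemma ninv_conj_tperm v p q : v * v = 1 -> nat_of_ord q = p.+1 ->
    tperm p q * v != v * tperm p q ->
  ninv (tperm p q * v * tperm p q) + (2 * (v q < v p))%N = ninv v + (2 * (v p < v q))%N.
Proof.
move=> vv pq ncomm; have pq_neq := adjacent_neq pq.
have ninv_mulC : ninv (v * tperm p q) = ninv (tperm p q * v).
  by rewrite -ninvV invMg tpermV (mulg1_eq vv).
have [vpq1 vpq2] : (v p, v q) != (p, q) /\ (v p, v q) != (q, p).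
  by split; apply: contraNneq ncomm => -[vp vq]; apply/commute_tpermP => //; [left | right].
have [vqp1 vqp2] : (v q, v p) != (p, q) /\ (v q, v p) != (q, p).
  by split; apply: contraNneq ncomm => -[vq vp]; apply/commute_tpermP => //; [right | left].
have ninv_svs := ninv_tperm_mul (v * tperm p q) pq.
rewrite !permM !ltn_tperm // ninv_mulC in ninv_svs.
have ninv_sv := ninv_tperm_mul v pq.
have -> : tperm p q * v * tperm p q = tperm p q * (v * tperm p q) by rewrite mulgA.
by case: ltngtP ninv_svs ninv_sv => _ /=; lia.
Qed.

Lemma rank4_ltimes v p q : v * v = 1 -> nat_of_ord q = p.+1 ->
  if v p < v q then rank4 (ltimes (tperm p q) v) = rank4 v + 4
  else rank4 (ltimes (tperm p q) v) + 4 = rank4 v.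
Proof.
move=> vv pq; have pq_neq := adjacent_neq pq; have qp_neq : q != p by rewrite eq_sym.
have [p_lt_q q_lt_p] : p < q /\ q < p = false by rewrite pq ltnSn ltnNge leqnSn.
have ninv_sv := ninv_tperm_mul v pq; have nmoved_sv := nmoved_tperm_mul v pq_neq.
rewrite ltimes_tpermE /rank4; case: eqP => [/eqP/(commute_tpermP _ pq_neq) vpq | /eqP ncomm].
  by move: ninv_sv nmoved_sv; case: vpq => -[-> ->];
    rewrite !eqxx (negbTE pq_neq) (negbTE qp_neq) ?p_lt_q ?q_lt_p /=; lia.
have := ninv_conj_tperm vv pq ncomm; rewrite nmoved_conj_tperm.
by case: ltngtP => [_|_|/val_inj/perm_inj/eqP]; rewrite ?(negbTE qp_neq) //=; lia.
Qed.

Lemma rank4_ltimes_leif v p q : v * v = 1 -> nat_of_ord q = p.+1 ->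
  rank4 (ltimes (tperm p q) v) <= rank4 v + 4 ?= iff (v p < v q).
Proof.
move=> vv pq; have := rank4_ltimes vv pq.
by case: ifP => _ E; split; apply/idP; rewrite -?E ?eqxx ?leq_addr //; lia.
Qed.

Lemma rank4_1 : rank4 1 = 0.
Proof.
rewrite /rank4 /ninv /nmoved !big1 // => [j _|[i j] _]; rewrite !perm1 ?eqxx //=.
by case: ltngtP.
Qed.

Lemma ltimes_invol v p q : v * v = 1 -> ltimes (tperm p q) v * ltimes (tperm p q) v = 1.
Proof.
move=> vv; rewrite ltimes_tpermE; case: eqP => comm.
  by rewrite !mulgA comm -(mulgA v) tperm2 mulg1 vv.
by rewrite !mulgA -(mulgA (tperm p q * v)) tperm2 mulg1 -(mulgA (tperm p q)) vv mulg1 tperm2.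
Qed.

Lemma ltimesK v p q : ltimes (tperm p q) (ltimes (tperm p q) v) = v.
Proof.
have ssK u : tperm p q * (tperm p q * u) = u by rewrite mulgA tperm2 mul1g.
have Kss u : u * tperm p q * tperm p q = u by rewrite -mulgA tperm2 mulg1.
rewrite [ltimes _ v]ltimes_tpermE; case: eqP => [comm | ncomm].
  by rewrite ltimes_tpermE ssK comm Kss eqxx.
have e1 : tperm p q * (tperm p q * v * tperm p q) = v * tperm p q by rewrite -mulgA ssK.
by rewrite ltimes_tpermE e1 Kss; case: eqP => // /esym.
Qed.

Lemma rank4_ltimes3_ascents v p q p' q' :
    v * v = 1 -> nat_of_ord q = p.+1 -> nat_of_ord q' = p'.+1 ->
    let v1 := ltimes (tperm p q) v in let v2 := ltimes (tperm p' q') v1 in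
    rank4 v + 12 <= rank4 (ltimes (tperm p q) v2) ->
  [/\ v p < v q, v1 p' < v1 q' & v2 p < v2 q].
Proof.
move=> vv pq pq' v1 v2 rank_v3.
have v1v1 : v1 * v1 = 1 by apply: ltimes_invol.
have v2v2 : v2 * v2 = 1 by apply: ltimes_invol.
have [le1 <-] := rank4_ltimes_leif vv pq.
have [le2 <-] := rank4_ltimes_leif v1v1 pq'.
have [le3 <-] := rank4_ltimes_leif v2v2 pq.
by split; rewrite eqn_leq ?le1 ?le2 ?le3 /=; subst v1 v2; lia.
Qed.

Lemma invol_descent v : v * v = 1 -> v != 1 ->
  exists p q : 'I_n, nat_of_ord q = p.+1 /\ v q < v p.
Proof.
move=> vv v_ne1.
have [/existsP[p /existsP[q /andP[/eqP pq lt_v]]] | no_descent] :=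
  boolP [exists p : 'I_n, exists q : 'I_n, (nat_of_ord q == p.+1) && (v q < v p)].
  by exists p, q.
case/negP: v_ne1; apply/eqP/permP => i; rewrite perm1.
have mono k (lt_kn : k < n) : k <= v (Ordinal lt_kn).
  elim: k lt_kn => [//|k IHk] lt_kn; have lt_kn' : k < n by lia.
  have le_v : v (Ordinal lt_kn') <= v (Ordinal lt_kn).
    rewrite leqNgt; apply: contra no_descent => lt_v.
    by apply/existsP; exists (Ordinal lt_kn'); apply/existsP; exists (Ordinal lt_kn); rewrite eqxx.
  have ne_v : v (Ordinal lt_kn') != v (Ordinal lt_kn).
    by rewrite (inj_eq perm_inj) -(inj_eq val_inj) /= neq_ltn ltnSn.
  move: (IHk lt_kn') le_v ne_v; rewrite -(inj_eq val_inj) /=; lia.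
have le_v (j : 'I_n) : j <= v j by case: j => k lt_kn; apply: mono.
apply: val_inj => /=; have := le_v (v i); rewrite -permM vv perm1 => le_vi.
by apply/eqP; rewrite eqn_leq le_vi le_v.
Qed.

Lemma sgen_tperm p q : nat_of_ord q = p.+1 -> sgen n q = tperm p q.
Proof.
move=> pq; have lt_q1n : q.-1 < n by rewrite pq ltn_ord.
rewrite /sgen (insubT (fun k => k < n) lt_q1n) (insubT (fun k => k < n) (ltn_ord q)).
by congr tperm; apply: val_inj; rewrite /= pq.
Qed.

Lemma sgenE (i : nat) : is_gen_index n i ->
  exists p q : 'I_n, [/\ nat_of_ord q = i, nat_of_ord q = p.+1 & sgen n i = tperm p q].
Proof.
case/andP=> i_gt0 lt_in; have lt_i1n : i.-1 < n by lia.
have pq : nat_of_ord (Ordinal lt_in) = (Ordinal lt_i1n).+1 by rewrite /=; lia.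
by exists (Ordinal lt_i1n), (Ordinal lt_in); rewrite -(sgen_tperm pq).
Qed.

Lemma act_seq_cat idx idx' v : act_seq (idx ++ idx') v = act_seq idx (act_seq idx' v).
Proof. exact: foldr_cat. Qed.

Lemma act_seq_invol idx v : all (is_gen_index n) idx -> v * v = 1 ->
  act_seq idx v * act_seq idx v = 1.
Proof.
move=> gen_idx vv; elim: idx gen_idx => [//|i idx IH] /= /andP[gen_i /IH act_vv].
by have [p [q [_ _ ->]]] := sgenE gen_i; apply: ltimes_invol.
Qed.

Lemma rank4_act_seq idx v : all (is_gen_index n) idx -> v * v = 1 ->
  rank4 (act_seq idx v) <= rank4 v + (4 * size idx)%N.
Proof.
move=> gen_idx vv; elim: idx gen_idx => [_|i idx IH /andP[gen_i gen_idx]] /=.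
  by rewrite muln0 addn0.
have [p [q [_ pq ->]]] := sgenE gen_i.
have [le_rank _] := rank4_ltimes_leif (act_seq_invol gen_idx vv) pq.
by have := IH gen_idx; lia.
Qed.

Lemma act_seq_rank4 v : v * v = 1 -> exists idx,
  [/\ all (is_gen_index n) idx, act_seq idx 1 = v & (4 * size idx)%N = rank4 v].
Proof.
move=> vv; have [m lt_vm] : exists m, rank4 v < m by exists (rank4 v).+1.
elim: m v lt_vm vv => [//|m IH] v lt_vm vv.
have [-> | v_ne1] := eqVneq v 1; first by exists [::]; split; rewrite ?rank4_1.
have [p [q [pq lt_v]]] := invol_descent vv v_ne1.
have gen_q : is_gen_index n q by rewrite /is_gen_index ltn_ord pq.
have := rank4_ltimes vv pq; rewrite ltnNge (ltnW lt_v) /= => rank_v.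
have [idx [gen_idx act_idx size_idx]] :=
  IH (ltimes (tperm p q) v) ltac:(lia) (ltimes_invol p q vv).
exists (nat_of_ord q :: idx); split; rewrite /= ?gen_q ?act_idx ?(sgen_tperm pq) ?ltimesK //; lia.
Qed.

Lemma rho_isE v r : v * v = 1 -> rho_is v r -> (4 * r)%N = rank4 v.
Proof.
move=> vv [[idx [<- gen_idx act_idx]] min_r].
have [idx' [gen_idx' act_idx' size_idx']] := act_seq_rank4 vv.
have := min_r _ gen_idx' act_idx'.
have := rank4_act_seq gen_idx (mulg1 (1 : 'S_n)); rewrite act_idx rank4_1.
lia.
Qed.
End Rank.

(* The operation ⋉ and the conclusion of the theorem for an abstract product and
   equality test, so that both can be transported from words to permutations. *)
Section Trichotomy.
Variables (T : Type) (mul : T -> T -> T) (eq : T -> T -> bool).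
Local Infix "**" := mul (at level 40, left associativity).
Local Infix "=?=" := eq (at level 70).

Definition ltimesG s v := if s ** v =?= v ** s then s ** v else s ** v ** s.

Definition trichotomy x y w :=
  let a := [&& ~~ (x ** w =?= w ** x), ~~ (y ** x ** w ** x =?= x ** w ** x ** y),
     ~~ (x ** y ** x ** w ** x ** y =?= y ** x ** w ** x ** y ** x), ~~ (y ** w =?= w ** y),
     ~~ (x ** y ** w ** y =?= y ** w ** y ** x)
   & ~~ (y ** x ** y ** w ** y ** x =?= x ** y ** w ** y ** x ** y)] in
  let b := [&& ~~ (x ** w =?= w ** x), ~~ (y ** x ** w ** x =?= x ** w ** x ** y),
     x ** y ** x ** w ** x ** y =?= y ** x ** w ** x ** y ** x, y ** w =?= w ** y,
     ~~ (x ** y ** w =?= y ** w ** x)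
   & ~~ (y ** x ** y ** w ** x =?= x ** y ** w ** x ** y)] in
  let c := [&& x ** w =?= w ** x, ~~ (y ** x ** w =?= x ** w ** y),
     ~~ (x ** y ** x ** w ** y =?= y ** x ** w ** y ** x), ~~ (y ** w =?= w ** y),
     ~~ (x ** y ** w ** y =?= y ** w ** y ** x)
   & y ** x ** y ** w ** y ** x =?= x ** y ** w ** y ** x ** y] in
  [|| [&& a, ~~ b & ~~ c], [&& ~~ a, b & ~~ c] | [&& ~~ a, ~~ b & c]].
End Trichotomy.

Section Transport.
Variables (T T' : Type) (mul : T -> T -> T) (eq : T -> T -> bool).
Variables (mul' : T' -> T' -> T') (eq' : T' -> T' -> bool) (f : T -> T').
Hypothesis f_mul : {morph f : a b / mul a b >-> mul' a b}.
Hypothesis f_eq : forall a b, eq' (f a) (f b) = eq a b.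

Lemma ltimesG_morph s v : ltimesG mul' eq' (f s) (f v) = f (ltimesG mul eq s v).
Proof. by rewrite /ltimesG -!f_mul f_eq; case: (eq _ _). Qed.

Lemma trichotomy_morph x y w : trichotomy mul' eq' (f x) (f y) (f w) = trichotomy mul eq x y w.
Proof. by rewrite /trichotomy -!f_mul !f_eq. Qed.
End Transport.

(* Words in [LSwap a b] (the transposition of the window points with labels
   [a] and [b]) and [LW] (standing for [w]).  Labels 0, 1, 2 denote the window
   points q0 < q1 < q2 and label [3 + i] denotes [w q_i] when it lies outside
   the window.  A pattern [c] records [w] on the window: [w q_i = q_(c_i)] if
   [c_i < 3], and [w q_i] lies outside the window otherwise. *)
Inductive letter := LSwap of nat & nat | LW.

Definition is_LW x := if x is LW then true else false.
Definition in_window x := if x is LSwap a b then (a < 3) && (b < 3) else true.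

Definition pat (c : nat * nat * nat) (i : nat) := nth 3 [:: c.1.1; c.1.2; c.2] i.
Definition labels c : seq nat :=
  [:: 0%N; 1%N; 2] ++ [seq 3 + i | i <- [:: 0%N; 1%N; 2] & 3 <= pat c i].
Definition lab_w c (l : nat) := if l < 3 then (if pat c l < 3 then pat c l else 3 + l) else l - 3.
Definition lab_swap (a b l : nat) := if l == a then b else if l == b then a else l.
Definition lab_letter c x (l : nat) := if x is LSwap a b then lab_swap a b l else lab_w c l.
Definition lab_word c (u : seq letter) (l : nat) := foldl (fun l x => lab_letter c x l) l u.

Lemma mem_labels c l : (l \in labels c) = (l < 3) || ((3 <= l < 6) && (3 <= pat c (l - 3))).
Proof.
rewrite /labels mem_cat !inE; case: l => [|[|[|[|[|[|l]]]]]] //=;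
  by rewrite /pat /=; case: (3 <= _); case: (3 <= _); case: (3 <= _).
Qed.

Definition pat_invol c :=
  all (fun i => (pat c i < 3) ==> (pat c (pat c i) == i)) [:: 0%N; 1%N; 2].

Lemma in_window_ltimesG e (s v : seq letter) :
  all in_window s -> all in_window v -> all in_window (ltimesG cat e s v).
Proof. by rewrite /ltimesG => s_in v_in; case: e; rewrite !all_cat ?s_in ?v_in. Qed.

Section Window.
Variables (n : nat) (w : 'S_n) (q0 q1 q2 : 'I_n).
Hypotheses (ww : w * w = 1) (q01 : nat_of_ord q1 = q0.+1) (q02 : nat_of_ord q2 = q0.+2).

Definition window := [:: q0; q1; q2].
Definition pos i := nth q0 window i.
Definition point l := if l < 3 then pos l else w (pos (l - 3)).
Definition ev_letter x := if x is LSwap a b then tperm (pos a) (pos b) else w.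
Definition ev_word u := foldr (fun x acc => ev_letter x * acc) 1 u.

Definition fits c := forall i, i < 3 ->
  (pat c i < 3 -> w (pos i) = pos (pat c i)) /\ (3 <= pat c i -> w (pos i) \notin window).

Lemma wK j : w (w j) = j. Proof. by rewrite -permM ww perm1. Qed.

Lemma pos_inj i j : i < 3 -> j < 3 -> pos i = pos j -> i = j.
Proof.
rewrite /pos /window => lt_i3 lt_j3 /(congr1 val).
by case: i lt_i3 => [|[|[|]]] //= _; case: j lt_j3 => [|[|[|]]] //= _; rewrite ?q01 ?q02; lia.
Qed.

Lemma pos_window i : i < 3 -> pos i \in window.
Proof. by rewrite /pos /window; case: i => [|[|[|]]] //= _; rewrite !inE eqxx ?orbT. Qed.

Lemma windowP j : j \in window -> exists2 i, i < 3 & j = pos i.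
Proof. by rewrite /window !inE => /or3P[]/eqP->; [exists 0%N|exists 1%N|exists 2]. Qed.

Lemma ev_word_cat u v : ev_word (u ++ v) = ev_word u * ev_word v.
Proof. by elim: u => [|x u IH] /=; rewrite ?mul1g // IH mulgA. Qed.

Lemma lab_letterP c x l : fits c -> in_window x -> l \in labels c ->
  lab_letter c x l \in labels c /\ ev_letter x (point l) = point (lab_letter c x l).
Proof.
move=> fit_c; rewrite mem_labels; case: x => [a b /andP[lt_a3 lt_b3]|] /=.
  case/orP => [lt_l3|/andP[/andP[l_ge3 l_lt6] out_l]].
    have pos_eq i j : i < 3 -> j < 3 -> (pos i == pos j) = (i == j).
      by move=> lt_i3 lt_j3; apply/eqP/eqP => [/pos_inj|->]; [apply|].
    rewrite /lab_swap /point lt_l3 tpermE !pos_eq //.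
    by case: ifP => _; [|case: ifP => _]; rewrite mem_labels ?lt_a3 ?lt_b3 ?lt_l3.
  have [la lb] : (l == a) = false /\ (l == b) = false by split; apply/eqP => E; lia.
  rewrite /lab_swap la lb mem_labels l_ge3 l_lt6 out_l orbT; split => //.
  rewrite /point ltnNge l_ge3 /=.
  have [_ /(_ out_l) w_out] := fit_c (l - 3) ltac:(lia).
  by rewrite tpermD //; apply: contraNneq w_out => <-; apply: pos_window.
move=> _; case/orP => [lt_l3|/andP[/andP[l_ge3 l_lt6] out_l]].
  have [w_in w_out] := fit_c l lt_l3.
  rewrite /lab_w lt_l3; case: ltnP => c_l.
    by rewrite mem_labels c_l; split => //; rewrite /point lt_l3 c_l w_in.
  rewrite mem_labels /= addKn c_l andbT /point lt_l3 /= addKn.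
  by split => //; lia.
rewrite /lab_w ltnNge l_ge3 /= mem_labels; split; first lia.
by rewrite /point ltnNge l_ge3 /= wK; case: ifP => //; lia.
Qed.

Lemma lab_wordP c u l : fits c -> all in_window u -> l \in labels c ->
  lab_word c u l \in labels c /\ ev_word u (point l) = point (lab_word c u l).
Proof.
move=> fit_c; rewrite /lab_word; elim: u l => [|x u IH] l /=; first by rewrite perm1.
case/andP=> x_in u_in l_lab; have [l'_lab E] := lab_letterP fit_c x_in l_lab.
by rewrite permM E; apply: IH.
Qed.

Lemma ev_word_pos c u k : fits c -> all in_window u -> k < 3 ->
  ev_word u (pos k) = point (lab_word c u k).
Proof.
move=> fit_c u_in lt_k3; have k_lab : k \in labels c by rewrite mem_labels lt_k3.
by have [_] := lab_wordP fit_c u_in k_lab; rewrite /point lt_k3.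
Qed.

Lemma point_inj c l l' : fits c -> l \in labels c -> l' \in labels c ->
  point l = point l' -> l = l'.
Proof.
move=> fit_c; rewrite !mem_labels /point.
case/orP=> [lt_l3|/andP[/andP[l_ge3 l_lt6] out_l]];
  case/orP=> [lt_l'3|/andP[/andP[l'_ge3 l'_lt6] out_l']].
- by rewrite lt_l3 lt_l'3; apply: pos_inj.
- rewrite lt_l3 ltnNge l'_ge3 /= => E.
  have [_ /(_ out_l')] := fit_c (l' - 3) ltac:(lia).
  by rewrite -E pos_window.
- rewrite lt_l'3 ltnNge l_ge3 /= => E.
  have [_ /(_ out_l)] := fit_c (l - 3) ltac:(lia).
  by rewrite E pos_window.
- rewrite ltnNge l_ge3 ltnNge l'_ge3 /= => /perm_inj/pos_inj.
  by move=> /(_ ltac:(lia) ltac:(lia)); lia.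
Qed.

Lemma ev_word_out u j : j \notin window -> w j \notin window -> all in_window u ->
  ev_word u j = if odd (count is_LW u) then w j else j.
Proof.
move=> j_out wj_out; elim: u j j_out wj_out => [|x u IH] j j_out wj_out /=; first by rewrite perm1.
case/andP=> x_in u_in; rewrite permM; case: x x_in => [a b /andP[lt_a3 lt_b3]|_] /=.
  by rewrite tpermD ?add0n ?IH //; apply: contraNneq j_out => <-; apply: pos_window.
by rewrite IH ?wK //; case: odd.
Qed.

Lemma ev_word_eq_model c u u' : fits c -> all in_window u -> all in_window u' ->
    odd (count is_LW u) = odd (count is_LW u') ->
  (ev_word u == ev_word u') = all (fun l => lab_word c u l == lab_word c u' l) (labels c).
Proof.
move=> fit_c u_in u'_in par_uu'; apply/eqP/allP => [E l l_lab|E].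
  have [l1_lab e1] := lab_wordP fit_c u_in l_lab.
  have [l2_lab e2] := lab_wordP fit_c u'_in l_lab.
  by apply/eqP; apply: (point_inj fit_c l1_lab l2_lab); rewrite -e1 -e2 E.
have E_point l : l \in labels c -> ev_word u (point l) = ev_word u' (point l).
  move=> l_lab; have [_ ->] := lab_wordP fit_c u_in l_lab.
  by have [_ ->] := lab_wordP fit_c u'_in l_lab; rewrite (eqP (E l l_lab)).
apply/permP => j; have [/windowP[i lt_i3 ->] | j_out] := boolP (j \in window).
  by have := E_point i; rewrite /point lt_i3 mem_labels lt_i3; apply.
have [/windowP[i lt_i3 wj] | wj_out] := boolP (w j \in window); last first.
  by rewrite !ev_word_out ?par_uu'.
have [w_in w_out] := fit_c i lt_i3.
have j_point : j = point (if pat c i < 3 then pat c i else 3 + i).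
  rewrite /point; case: (ltnP (pat c i) 3) => c_i /=; first by rewrite c_i -(w_in c_i) -wj wK.
  by rewrite addKn -wj wK.
rewrite j_point E_point // mem_labels; case: (ltnP (pat c i) 3) => [-> //|c_i].
by rewrite addKn c_i andbT; apply/orP; right; lia.
Qed.

(* The last branch is never taken on the words compared below; it only makes
   [eq_modelE] unconditional. *)
Definition eq_model c u u' :=
  if [&& odd (count is_LW u) == odd (count is_LW u'), all in_window u & all in_window u']
  then all (fun l => lab_word c u l == lab_word c u' l) (labels c)
  else ev_word u == ev_word u'.

Lemma eq_modelE c u u' : fits c -> (ev_word u == ev_word u') = eq_model c u u'.
Proof.
move=> fit_c; rewrite /eq_model; case: ifP => // /and3P[/eqP par_uu' u_in u'_in].
exact: ev_word_eq_model.
Qed.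

Lemma fits_pat_invol c : fits c -> pat_invol c.
Proof.
move=> fit_c; apply/allP => i; rewrite !inE => i012.
have lt_i3 : i < 3 by case/or3P: i012 => /eqP->.
apply/implyP => c_i; have [w_in _] := fit_c i lt_i3.
have [w_in' w_out'] := fit_c _ c_i.
case: (ltnP (pat c (pat c i)) 3) => c_ci.
  by apply/eqP; apply: pos_inj => //; rewrite -(w_in' c_ci) -(w_in c_i) wK.
by move: (w_out' c_ci); rewrite -(w_in c_i) wK pos_window.
Qed.

Definition point_sep c :=
  all (fun l => (l < 3) || (point l < q0) || (q0.+2 < point l)) (labels c) &&
  all (fun l => all (fun l' => (l == l') || (val (point l) != val (point l'))) (labels c))
    (labels c).

Lemma fits_point_sep c : fits c -> point_sep c.
Proof.
move=> fit_c; apply/andP; split; apply/allP => l l_lab.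
  move: (l_lab); rewrite mem_labels => /orP[-> // | /andP[/andP[l_ge3 l_lt6] out_l]].
  have [_ /(_ out_l)] := fit_c (l - 3) ltac:(lia).
  rewrite /point ltnNge l_ge3 /= /window !inE -!(inj_eq val_inj) /=.
  by rewrite q01 q02; lia.
apply/allP => l' l'_lab; case: eqP => //= ne; apply/negP => /eqP/val_inj E.
exact: ne (point_inj fit_c l_lab l'_lab E).
Qed.

Lemma fits_index : fits (index (w q0) window, index (w q1) window, index (w q2) window).
Proof.
have index_fits j : (index j window < 3 -> j = pos (index j window)) /\
                    (3 <= index j window -> j \notin window).
  rewrite -[3]/(size window) index_mem leqNgt index_mem.
  by split => [j_in | ->]; rewrite // /pos nth_index.
by case=> [|[|[|]]] // _; apply: index_fits.
Qed.

Lemma window_trichotomy (a b : nat) : (a + b = 1)%N ->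
  let x := tperm (pos a) (pos a.+1) in
  let y := tperm (pos b) (pos b.+1) in
  w (pos a) < w (pos a.+1) ->
  ltimes x w (pos b) < ltimes x w (pos b.+1) ->
  ltimes y (ltimes x w) (pos a) < ltimes y (ltimes x w) (pos a.+1) ->
  trichotomy *%g eq_op x y w.
Proof.
move=> ab x y.
set c := (index (w q0) window, index (w q1) window, index (w q2) window).
have fit_c : fits c := fits_index.
have c_lt4 : [&& c.1.1 < 4, c.1.2 < 4 & c.2 < 4] 
  by apply/and3P; split; apply: (@leq_ltn_trans 3); rewrite ?index_size.
set X := [:: LSwap a a.+1]; set Y := [:: LSwap b b.+1]; set W := [:: LW].
set e := eq_model c.
have ev_eq u v : (ev_word u == ev_word v) = e u v by apply: eq_modelE.
have ev_ltimes s v : ltimes (ev_word s) (ev_word v) = ev_word (ltimesG cat e s v).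
  exact: (ltimesG_morph ev_word_cat ev_eq).
have -> : x = ev_word X by rewrite /ev_word /= mulg1.
have -> : y = ev_word Y by rewrite /ev_word /= mulg1.
have -> : w = ev_word W by rewrite /ev_word /= mulg1.
rewrite (trichotomy_morph ev_word_cat ev_eq) !ev_ltimes.
have [lt_a3 lt_a13 lt_b3 lt_b13] : [/\ a < 3, a.+1 < 3, b < 3 & b.+1 < 3] by split; lia.
have X_in : all in_window X by rewrite /= lt_a3 lt_a13.
have Y_in : all in_window Y by rewrite /= lt_b3 lt_b13.
rewrite !(ev_word_pos fit_c) //; try by do ! apply: in_window_ltimesG.
have := fits_pat_invol fit_c; have := fits_point_sep fit_c.
rewrite /e /X /Y /W; clear -c_lt4 ab q01 q02.
(* 2 x 64 cases: [pat_invol] rules out the impossible patterns and [point_sep]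
   decides the remaining comparisons between points. *)
have [[-> ->] | [-> ->]] : (a = 0 /\ b = 1 \/ a = 1 /\ b = 0)%N by lia.
all: case: c c_lt4 => [[c0 c1] c2] /=.
all: case: c0 => [|[|[|[|//]]]]; case: c1 => [|[|[|[|//]]]]; case: c2 => [|[|[|[|//]]]] => _ /=.
all: move=> sep_c; try by [].
all: rewrite /trichotomy /eq_model /ltimesG /=.
all: rewrite /point_sep /point /lab_w /lab_swap /pat /pos /= in sep_c *.
all: move=> *; lia.
Qed.
End Window.

Lemma take_cat_last3 (T : Type) (x0 : T) (s : seq T) : 3 <= size s ->
  s = take (size s - 3) s ++
      [:: nth x0 s (size s - 3); nth x0 s (size s - 2); nth x0 s (size s - 1)].
Proof.
move=> s3; rewrite -{1}(cat_take_drop (size s - 3) s); congr (_ ++ _).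
apply: (@eq_from_nth _ x0) => [|m]; rewrite size_drop /=; first lia.
by case: m => [|[|[|m]]] /= lt_m; [rewrite nth_drop; congr nth; lia..| lia].
Qed.

Theorem corollary2p14 (n : nat) (w : 'S_n) (idx : seq nat) :
  is_invol w ->
  all (is_gen_index n) idx ->
  reduced_seq idx w ->
  3 <= size idx ->
  nth 0%N idx (size idx - 3) = nth 0%N idx (size idx - 1) ->
  (nth 0%N idx (size idx - 1) = (nth 0%N idx (size idx - 2)).+1 \/
   (nth 0%N idx (size idx - 1)).+1 = nth 0%N idx (size idx - 2)) ->
  let x := sgen n (nth 0%N idx (size idx - 1)) in
  let y := sgen n (nth 0%N idx (size idx - 2)) in
  let a := [&& x * w != w * x, y * x * w * x != x * w * x * y,
               x * y * x * w * x * y != y * x * w * x * y * x,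
               y * w != w * y, x * y * w * y != y * w * y * x
             & y * x * y * w * y * x != x * y * w * y * x * y] in
  let b := [&& x * w != w * x, y * x * w * x != x * w * x * y,
               x * y * x * w * x * y == y * x * w * x * y * x,
               y * w == w * y, x * y * w != y * w * x
             & y * x * y * w * x != x * y * w * x * y] in
  let c := [&& x * w == w * x, y * x * w != x * w * y,
               x * y * x * w * y != y * x * w * y * x,
               y * w != w * y, x * y * w * y != y * w * y * x
             & y * x * y * w * y * x == x * y * w * y * x * y] in
  [|| [&& a, ~~ b & ~~ c], [&& ~~ a, b & ~~ c] | [&& ~~ a, ~~ b & c]].
Proof.
move=> /eqP ww gen_idx [r [rho_w rho_wk]] k3 e13 e12.
have idxE := take_cat_last3 0%N k3; rewrite e13 in idxE.
set i := nth 0%N idx (size idx - 1) in e12 idxE *.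
set j := nth 0%N idx (size idx - 2) in e12 idxE *.
set pre := take _ idx in idxE.
have := gen_idx; rewrite idxE all_cat /= andbT => /and4P[gen_pre gen_i gen_j _].
have [p [q [qi pq sx]]] := sgenE gen_i; have [p' [q' [q'j pq' sy]]] := sgenE gen_j.
have := rho_isE (act_seq_invol gen_idx ww) rho_wk.
rewrite idxE act_seq_cat size_cat /= sx sy => rank_pre.
have le_pre :=
  rank4_act_seq gen_pre (ltimes_invol p q (ltimes_invol p' q' (ltimes_invol p q ww))).
have [|asc1 asc2 asc3] := rank4_ltimes3_ascents ww pq pq'.
  by have := rho_isE ww rho_w; lia.
case: e12 => [ij | ji].
- have p_q' : p = q' by apply: val_inj => /=; lia.
  have qp' : nat_of_ord q = p'.+2 by lia.
  subst p; exact: (window_trichotomy ww pq' qp' (a := 1) (b := 0) erefl asc1 asc2 asc3).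
- have p'_q : p' = q by apply: val_inj => /=; lia.
  have q'p : nat_of_ord q' = p.+2 by lia.
  subst p'; exact: (window_trichotomy ww pq q'p (a := 0) (b := 1) erefl asc1 asc2 asc3).
Qed.
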